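(* Let $\theta_0,\alpha_0>0$, let $S_n=\{\mathbf s_1,\dots,\mathbf s_n\}$ be distinct points in $[0,1]^d$, and suppose Assumption A2 (stated in the context) holds. For $\alpha>0$ let $\lambda_{1,n}(\alpha),\dots,\lambda_{n,n}(\alpha)$ be the eigenvalues of $K_{\alpha_0,\nu}(S_n)^{-1}K_{\alpha,\nu}(S_n)$. Then for every $\alpha$ with $|\alpha/\alpha_0-1|\le r_0$ and every $k=1,\dots,n$, $$1-L|\alpha/\alpha_0-1|^\kappa\le\lambda_{k,n}(\alpha)\le1+L|\alpha/\alpha_0-1|^\kappa.$$ Furthermore, if $\alpha\le\alpha_0$ then $\lambda_{k,n}(\alpha)\ge1$ for all $k$, and if $\alpha\ge\alpha_0$ then $0\le\lambda_{k,n}(\alpha)\le1$ for all $k$.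
   Context: $K_{\alpha,\nu}:\mathbb R^d\to\mathbb R$ ($\alpha>0$) is a family of positive definite functions, $K_{\alpha,\nu}(S_n)$ the $n\times n$ matrix with entries $K_{\alpha,\nu}(\mathbf s_i-\mathbf s_j)$, and $f_{\theta,\alpha,\nu}(w)=(2\pi)^{-d}\int e^{-\imath w^Tx}\theta K_{\alpha,\nu}(x)dx$ the spectral density of $\theta K_{\alpha,\nu}$. (Equivalently, the $\lambda_{k,n}(\alpha)$ are the diagonal entries of $\Lambda_n(\alpha)$ where an invertible $U_\alpha$ satisfies $\theta_0U_\alpha^TK_{\alpha_0,\nu}(S_n)U_\alpha=I_n$ and $\theta_0U_\alpha^TK_{\alpha,\nu}(S_n)U_\alpha=\Lambda_n(\alpha)$ diagonal.) Assumption A2: (i) there exist $L>0$, $r_0\in(0,1/2)$, $\kappa>0$ such that $\sup_w|f_{\theta_0,\alpha,\nu}(w)/f_{\theta_0,\alpha_0,\nu}(w)-1|\le L|\alpha/\alpha_0-1|^\kappa$ whenever $|\alpha/\alpha_0-1|\le r_0$; (ii) $f_{\theta,\alpha,\nu}(w)$ is non-increasing in $\alpha$ for each $\theta>0$, $w\in\mathbb R^d$. *)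

From HB Require Import structures.
From mathcomp Require Import all_boot all_order all_algebra.
From mathcomp Require Import all_classical all_reals all_analysis.
Set Implicit Arguments. Unset Strict Implicit. Unset Printing Implicit Defensive.
Import Order.TTheory GRing.Theory Num.Theory.
Import numFieldNormedType.Exports.
Local Open Scope classical_set_scope.
Local Open Scope ring_scope.

(* Points of R^d are represented as d.-tuples of reals
   (these carry MathComp-Analysis' product sigma-algebra). *)

Definition tsub (R : realType) (d : nat) (x y : d.-tuple R) : d.-tuple R :=
  [tuple tnth x i - tnth y i | i < d].

Definition tdot (R : realType) (d : nat) (w x : d.-tuple R) : R :=
  \sum_(i < d) tnth w i * tnth x i.

(* Integral over R^d w.r.t. Lebesgue measure, written as the iterated
   (real-valued) Lebesgue integral  int dw_1 ... int dw_d g(w);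
   by Fubini this is the Lebesgue integral on R^d for integrable g. *)
Fixpoint iint (R : realType) (d : nat) : (d.-tuple R -> R) -> R :=
  match d return (d.-tuple R -> R) -> R with
  | 0 => fun g => g [tuple]
  | d'.+1 => fun g =>
      Rintegral (@lebesgue_measure R) setT
        (fun x : R => @iint R d' (fun t => g (cons_tuple x t)))
  end.

(* Iterated extended-real integral (Tonelli) for nonnegative integrands. *)
Fixpoint iintE (R : realType) (d : nat) : (d.-tuple R -> \bar R) -> \bar R :=
  match d return (d.-tuple R -> \bar R) -> \bar R with
  | 0 => fun g => g [tuple]
  | d'.+1 => fun g =>
      (\int[@lebesgue_measure R]_(x in setT)
         @iintE R d' (fun t => g (cons_tuple x t)))%E
  end.

Definition covmx (R : realType) (d n : nat) (C : d.-tuple R -> R)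
  (s : 'I_n -> d.-tuple R) : 'M[R]_n :=
  \matrix_(i, j) C (tsub (s i) (s j)).

Definition posdef_fun (R : realType) (d : nat) (C : d.-tuple R -> R) : Prop :=
  forall (m : nat) (s : 'I_m -> d.-tuple R), injective s ->
  forall c : 'cV[R]_m, c != 0 -> 0 < (c^T *m covmx C s *m c) ord0 ord0.

(* g is the spectral density of the (real, stationary) covariance C:
   g is a nonnegative Lebesgue-integrable function on R^d with
   C(x) = int e^{i w^T x} g(w) dw, the complex identity being split into
   its real and imaginary parts. *)
Definition spectral_density (R : realType) (d : nat)
  (C : d.-tuple R -> R) (g : d.-tuple R -> R) : Prop :=
  [/\ forall w, 0 <= g w,
      measurable_fun setT g,
      (iintE (fun w => (g w)%:E) < +oo)%E,
      forall x, C x = iint (fun w => cos (tdot w x) * g w)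
    & forall x, iint (fun w => sin (tdot w x) * g w) = 0].

From HB Require Import structures.
From mathcomp Require Import all_boot all_order all_algebra.
From mathcomp Require Import all_classical all_reals all_analysis.
From mathcomp Require Import measurable_realfun ring.
Import Order.TTheory GRing.Theory Num.Theory.
Import numFieldNormedType.Exports.
Local Open Scope classical_set_scope.
Local Open Scope ring_scope.

Set Implicit Arguments. Unset Strict Implicit. Unset Printing Implicit Defensive.

(* Spectral representation: for a covariance K with spectral density f,
   [u K(S_n) u^T = \int |\sum_j u_j e^{i w.s_j}|^2 f(w) dw], so a pointwise
   inequality [c1 f1 <= c2 f2] between spectral densities passes to the
   quadratic forms of the covariance matrices.  An eigenvalue [lambda] of
   [K0^-1 K] is a ratio [u K u^T / u K0 u^T] with [u <> 0] (take [u = v K0^-1]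
   for a left eigenvector [v]), so the bounds on [f_alpha / f_alpha0] given by
   A2 (i) and the monotonicity A2 (ii) bound [lambda]. *)

Section RintegralSum.
Context d (T : measurableType d) (R : realType) (mu : {measure set T -> \bar R}).

Lemma Rintegral_sum (I : finType) (a : I -> R) (G : I -> T -> R) :
  (forall i, mu.-integrable setT (EFin \o G i)) ->
  Rintegral mu setT (fun x => \sum_i a i * G i x) =
  \sum_i a i * Rintegral mu setT (G i).
Proof.
move=> iG.
have iaG i : mu.-integrable setT (EFin \o (fun x => a i * G i x)).
  have -> : EFin \o (fun x => a i * G i x) = (fun x => (a i)%:E * (EFin \o G i) x)%E.
    by apply/funext.
  exact: integrableZl.
under [RHS]eq_bigr do rewrite -RintegralZl //.
rewrite /Rintegral.
transitivity (fine (\sum_i \int[mu]_(x in setT) ((a i * G i x)%:E))%E).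
  congr fine; rewrite -integral_sum //.
  by apply: eq_integral => x _; rewrite sumEFin.
by rewrite -(EFin_sum_fine _ (fun i _ => integrable_fin_num measurableT (iaG i))).
Qed.

End RintegralSum.

Section ParametricRintegral.
Context dX dY (X : measurableType dX) (Y : measurableType dY) (R : realType).
Variable nu : {sigma_finite_measure set Y -> \bar R}.

Lemma measurable_fun_Rintegral_param (G : X * Y -> R) :
  measurable_fun setT G ->
  measurable_fun setT (fun x => Rintegral nu setT (fun y => G (x, y))).
Proof.
move=> mG; rewrite /Rintegral.
apply: (measurableT_comp (fine_measurable measurableT)).
have -> : (fun x => (\int[nu]_(y in setT) (G (x, y))%:E)%E) =
  (fun x => fubini_F nu ((EFin \o G)^\+) x - fubini_F nu ((EFin \o G)^\-) x)%E.
  apply/funext => x; rewrite [LHS]integralE /fubini_F.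
  by congr (_ - _)%E; apply: eq_integral => y _; rewrite ?funeposE ?funenegE.
have mGE : measurable_fun [set: (X * Y)%type] (EFin \o G) by exact/measurable_EFinP.
apply: emeasurable_funB.
- apply: (measurable_fun_fubini_tonelli_F _ (measurable_funepos mGE)).
  by move=> p; exact: funepos_ge0.
- apply: (measurable_fun_fubini_tonelli_F _ (measurable_funeneg mGE)).
  by move=> p; exact: funeneg_ge0.
Qed.

End ParametricRintegral.

Lemma abs_fine_le_abse (R : realDomainType) (e : \bar R) : (`|fine e|%:E <= `|e|)%E.
Proof. by case: e => [r| |] /=; rewrite ?normr0 ?lexx ?leey. Qed.

Section IteratedIntegral.
Variable R : realType.
Local Notation leb := (@lebesgue_measure R).

Lemma measurable_fun_cons_param dX (X : measurableType dX) dU (U : measurableType dU)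
    n (h : X * n.+1.-tuple R -> U) :
  measurable_fun setT h ->
  measurable_fun [set: (X * R) * n.-tuple R]
    (fun p => h (p.1.1, cons_tuple p.1.2 p.2)).
Proof.
move=> mh; apply: (measurableT_comp mh); apply: measurable_fun_pair.
  exact: (measurableT_comp measurable_fst measurable_fst).
apply: (@measurable_cons _ _ _ _ (fun p : (X * R) * n.-tuple R => p.1.2) n snd).
  exact: (measurableT_comp measurable_snd measurable_fst).
exact: measurable_snd.
Qed.

Lemma measurable_fun_uncurry_cons dU (U : measurableType dU) n
    (h : n.+1.-tuple R -> U) :
  measurable_fun setT h ->
  measurable_fun [set: R * n.-tuple R] (fun p => h (cons_tuple p.1 p.2)).
Proof.
move=> mh; apply: (measurableT_comp mh).
exact: (@measurable_cons _ _ _ _ fst n snd measurable_fst measurable_snd).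
Qed.

Lemma measurable_fun_cons dU (U : measurableType dU) n (h : n.+1.-tuple R -> U) x :
  measurable_fun setT h -> measurable_fun setT (fun t => h (cons_tuple x t)).
Proof.
move=> mh; apply: (measurableT_comp mh).
apply: (@measurable_cons _ _ _ _ (fun _ : n.-tuple R => x) n (fun t => t)).
  exact: measurable_cst.
exact: measurable_id.
Qed.

Lemma measurable_fun_iint_param n : forall dX (X : measurableType dX)
    (h : X * n.-tuple R -> R),
  measurable_fun setT h -> measurable_fun setT (fun x => iint (fun t => h (x, t))).
Proof.
elim: n => [|n IH] dX X h mh /=.
  by apply: (measurableT_comp mh); exact: measurable_fun_pair.
exact: (@measurable_fun_Rintegral_param _ _ _ _ _ leb _
  (IH _ _ _ (measurable_fun_cons_param mh))).
Qed.

Lemma iintE_ge0 n (h : n.-tuple R -> \bar R) :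
  (forall t, (0 <= h t)%E) -> (0 <= iintE h)%E.
Proof.
elim: n h => [|n IH] h h0 /=; first exact: h0.
by apply: integral_ge0 => x _; apply: IH.
Qed.

Lemma iint_ge0 n (h : n.-tuple R -> R) : (forall t, 0 <= h t) -> 0 <= iint h.
Proof.
elim: n h => [|n IH] h h0 /=; first exact: h0.
apply: fine_ge0; apply: integral_ge0 => x _.
by rewrite lee_fin; apply: IH.
Qed.

Lemma measurable_fun_iintE_param n : forall dX (X : measurableType dX)
    (h : X * n.-tuple R -> \bar R),
  measurable_fun setT h -> (forall p, (0 <= h p)%E) ->
  measurable_fun setT (fun x => iintE (fun t => h (x, t))).
Proof.
elim: n => [|n IH] dX X h mh h0 /=.
  by apply: (measurableT_comp mh); exact: measurable_fun_pair.
have mF : measurable_fun [set: (X * measurableTypeR R)%type]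
    (fun p => iintE (fun t => h (p.1, cons_tuple p.2 t))).
  exact: IH _ _ _ (measurable_fun_cons_param mh) (fun p => h0 _).
exact: (@measurable_fun_fubini_tonelli_F _ _ _ _ _ leb _ mF
  (fun p => iintE_ge0 (fun t => h0 _))).
Qed.

Lemma le_iintE n (h1 h2 : n.-tuple R -> \bar R) :
  measurable_fun setT h1 -> measurable_fun setT h2 ->
  (forall t, (0 <= h1 t)%E) -> (forall t, (h1 t <= h2 t)%E) ->
  (iintE h1 <= iintE h2)%E.
Proof.
elim: n h1 h2 => [|n IH] h1 h2 m1 m2 h10 h12 /=; first exact: h12.
have h20 t : (0 <= h2 t)%E by apply: le_trans (h12 t).
apply: ge0_le_integral => //.
- by move=> x _; apply: iintE_ge0.
- exact: measurable_fun_iintE_param (measurable_fun_uncurry_cons m1) (fun p => h10 _).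
- exact: measurable_fun_iintE_param (measurable_fun_uncurry_cons m2) (fun p => h20 _).
- by move=> x _; apply: IH => //; exact: measurable_fun_cons.
Qed.

Lemma le_abs_iint n (h : n.-tuple R -> R) :
  measurable_fun setT h -> (`|iint h|%:E <= iintE (fun t => `|h t|%:E))%E.
Proof.
elim: n h => [|n IH] h mh //=.
have mF : measurable_fun setT (fun x => iint (fun t => h (cons_tuple x t))).
  exact: measurable_fun_iint_param (measurable_fun_uncurry_cons mh).
apply: le_trans (abs_fine_le_abse _) _.
apply: le_trans (le_abse_integral _ _ _) _ => //; first exact/measurable_EFinP.
apply: ge0_le_integral => //.
- exact/measurableT_comp/measurable_EFinP.
- apply: (measurable_fun_iintE_param (h := fun p => `|h (cons_tuple p.1 p.2)|%:E)) => //.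
  apply/measurable_EFinP; apply: measurableT_comp => //.
  exact: measurable_fun_uncurry_cons.
- by move=> x _; apply: IH; exact: measurable_fun_cons.
Qed.

Definition iintegrable n (h : n.-tuple R -> R) : Prop :=
  measurable_fun setT h /\ (iintE (fun t => `|h t|%:E) < +oo)%E.

Section IntegrableSections.
Variables (n : nat) (h : n.+1.-tuple R -> R).
Hypothesis ih : iintegrable h.

Lemma measurable_fun_iintE_abs_section :
  measurable_fun setT (fun x => iintE (fun t => `|h (cons_tuple x t)|%:E)).
Proof.
apply: (measurable_fun_iintE_param (h := fun p => `|h (cons_tuple p.1 p.2)|%:E)) => //.
apply/measurable_EFinP; apply: measurableT_comp => //.
exact: measurable_fun_uncurry_cons ih.1.
Qed.

Lemma iintegrable_section_integrable :
  leb.-integrable setT (EFin \o fun x => iint (fun t => h (cons_tuple x t))).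
Proof.
have mF : measurable_fun setT (fun x => iint (fun t => h (cons_tuple x t))).
  exact: measurable_fun_iint_param (measurable_fun_uncurry_cons ih.1).
apply/integrableP; split; first exact/measurable_EFinP.
apply: le_lt_trans ih.2; apply: ge0_le_integral => //.
- exact/measurableT_comp/measurable_EFinP.
- exact: measurable_fun_iintE_abs_section.
- by move=> x _; apply: le_abs_iint; exact: measurable_fun_cons ih.1.
Qed.

Lemma iintegrable_section_ae :
  \forall x \ae leb, iintegrable (fun t => h (cons_tuple x t)).
Proof.
have : leb.-integrable setT (fun x => iintE (fun t => `|h (cons_tuple x t)|%:E)).
  apply/integrableP; split; first exact: measurable_fun_iintE_abs_section.
  by under eq_integral do rewrite gee0_abs ?iintE_ge0//; exact: ih.2.
move/integrable_ae => /(_ measurableT); apply: filterS => x /(_ Logic.I) fin.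
by split; [exact: measurable_fun_cons ih.1 | rewrite ltey_eq fin].
Qed.

End IntegrableSections.

Lemma iint_lincomb n (I : finType) (a : I -> R) (h : I -> n.-tuple R -> R) :
  (forall i, iintegrable (h i)) ->
  iint (fun t => \sum_i a i * h i t) = \sum_i a i * iint (h i).
Proof.
elim: n h => [|n IH] h ih //=.
rewrite -Rintegral_sum; last by move=> i; exact: iintegrable_section_integrable.
rewrite /Rintegral; congr fine; apply: ae_eq_integral => //.
- apply/measurable_EFinP.
  apply: (measurable_fun_iint_param (h := fun p => \sum_i a i * h i (cons_tuple p.1 p.2))).
  apply: measurable_sum => i; apply: measurable_funM => //.
  exact: measurable_fun_uncurry_cons (ih i).1.
- apply/measurable_EFinP; apply: measurable_sum => i; apply: measurable_funM => //.
  exact: measurable_fun_iint_param (measurable_fun_uncurry_cons (ih i).1).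
- have : \forall x \ae leb, forall i, iintegrable (fun t => h i (cons_tuple x t)).
    by apply: filter_forall => i; exact: iintegrable_section_ae.
  by apply: (@filterS _ _ (ae_filter_ringOfSetsType leb)) => x /IH /= -> _.
Qed.

End IteratedIntegral.

Section QuadForm.
Variable F : fieldType.

Definition quad_form n (u : 'rV[F]_n) (C : 'M[F]_n) : F :=
  \sum_(j < n) \sum_(k < n) u 0 j * u 0 k * C j k.

Lemma quad_formE n (u : 'rV[F]_n) C : (u *m C *m u^T) 0 0 = quad_form u C.
Proof.
rewrite /quad_form mxE; under eq_bigr do rewrite !mxE mulr_suml.
rewrite exchange_big /=; apply: eq_bigr => j _; apply: eq_bigr => k _.
by rewrite ?mxE; ring.
Qed.

Lemma eigenvalue_invmx_mul_quad_form n (C0 C : 'M[F]_n) lambda :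
  C0 \in unitmx -> eigenvalue (invmx C0 *m C) lambda ->
  exists2 u : 'rV_n, u != 0 & quad_form u C = lambda * quad_form u C0.
Proof.
move=> uC0 /eigenvalueP [v vM v0]; set u := v *m invmx C0.
have uC0v : u *m C0 = v by rewrite mulmxKV.
exists u; first by apply: contraNneq v0 => u0; rewrite -uC0v u0 mul0mx.
have uC : u *m C = lambda *: (u *m C0) by rewrite -mulmxA vM uC0v.
by rewrite -!quad_formE uC -scalemxAl mxE.
Qed.

End QuadForm.

Section EigenvalueBounds.
Variables (R : realFieldType) (n : nat) (C0 C : 'M[R]_n).
Hypothesis C0_pd : forall u, u != 0 -> 0 < quad_form u C0.

Lemma quad_form_gt0_unitmx : C0 \in unitmx.
Proof.
rewrite unitmxE unitfE; apply/negP => /det0P [v v0 vC0].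
by have := C0_pd v0; rewrite -quad_formE vC0 mul0mx mxE ltxx.
Qed.

Lemma le_eigenvalue_invmx_mul a lambda :
  (forall u, u != 0 -> a * quad_form u C0 <= quad_form u C) ->
  eigenvalue (invmx C0 *m C) lambda -> a <= lambda.
Proof.
move=> le_aC /(eigenvalue_invmx_mul_quad_form quad_form_gt0_unitmx) [u u0 uC].
by have := le_aC u u0; rewrite uC ler_pM2r ?C0_pd.
Qed.

Lemma eigenvalue_invmx_mul_le b lambda :
  (forall u, u != 0 -> quad_form u C <= b * quad_form u C0) ->
  eigenvalue (invmx C0 *m C) lambda -> lambda <= b.
Proof.
move=> le_Cb /(eigenvalue_invmx_mul_quad_form quad_form_gt0_unitmx) [u u0 uC].
by have := le_Cb u u0; rewrite uC ler_pM2r ?C0_pd.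
Qed.

End EigenvalueBounds.

Section SpectralComparison.
Variables (R : realType) (d n : nat) (s : 'I_n -> d.-tuple R).

Lemma measurable_tdot (x : d.-tuple R) : measurable_fun setT (fun w => tdot w x).
Proof.
apply: measurable_sum => i; apply: measurable_funM => //.
exact: measurable_tnth.
Qed.

Lemma spectral_density_iintegrable (C g : d.-tuple R -> R) x :
  spectral_density C g -> iintegrable (fun w => cos (tdot w x) * g w).
Proof.
move=> [g0 mg ig _ _].
have mcg : measurable_fun setT (fun w => cos (tdot w x) * g w).
  apply: measurable_funM => //; apply: measurableT_comp (measurable_tdot x).
  exact: continuous_measurable_fun (@continuous_cos R).
split => //; apply: le_lt_trans ig; apply: le_iintE => //.
- by apply/measurable_EFinP; exact: measurableT_comp.
- exact/measurable_EFinP.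
- move=> w; rewrite lee_fin normrM (ger0_norm (g0 w)).
  by rewrite ler_piMl // cos_max.
Qed.

Lemma tdot_tsub (w x y : d.-tuple R) : tdot w (tsub x y) = tdot w x - tdot w y.
Proof.
rewrite /tdot /tsub -sumrB; apply: eq_bigr => i _.
by rewrite tnth_mktuple; ring.
Qed.

Lemma quad_form_covmx_cos_ge0 (u : 'rV[R]_n) w :
  0 <= quad_form u (covmx (fun x => cos (tdot w x)) s).
Proof.
have -> : quad_form u (covmx (fun x => cos (tdot w x)) s) =
    (\sum_j u 0 j * cos (tdot w (s j))) ^+ 2 +
    (\sum_j u 0 j * sin (tdot w (s j))) ^+ 2.
  rewrite !expr2 !mulr_suml -big_split; apply: eq_bigr => j _.
  rewrite !mulr_sumr -big_split; apply: eq_bigr => k _.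
  by rewrite mxE tdot_tsub cosB /=; ring.
by rewrite addr_ge0 ?sqr_ge0.
Qed.

Lemma quad_form_covmxZ (u : 'rV[R]_n) (K : d.-tuple R -> R) c :
  quad_form u (covmx (fun x => c * K x) s) = c * quad_form u (covmx K s).
Proof.
rewrite /quad_form mulr_sumr; apply: eq_bigr => j _.
rewrite mulr_sumr; apply: eq_bigr => k _.
by rewrite !mxE; ring.
Qed.

Lemma le_quad_form_covmx (K1 K2 f1 f2 : d.-tuple R -> R) (a b : R) u :
  spectral_density K1 f1 -> spectral_density K2 f2 ->
  (forall w, a * f1 w <= b * f2 w) ->
  a * quad_form u (covmx K1 s) <= b * quad_form u (covmx K2 s).
Proof.
move=> sd1 sd2 le_f.
(* Writing [b q2 - a q1] as a single linear combination of the integrals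
   [iint (cos * f_i)] needs only their integrability, not that of [b f2 - a f1]. *)
pose H (q : bool * ('I_n * 'I_n)) w :=
  cos (tdot w (tsub (s q.2.1) (s q.2.2))) * (if q.1 then f2 else f1) w.
pose c (q : bool * ('I_n * 'I_n)) :=
  (if q.1 then b else - a) * (u 0 q.2.1 * u 0 q.2.2).
have sum_pair (I J : finType) (G : I * J -> R) :
    \sum_p G p = \sum_i \sum_j G (i, j).
  by rewrite pair_bigA; apply: eq_bigr => -[].
have sumE (G : bool * ('I_n * 'I_n) -> R) :
    \sum_q G q = \sum_j \sum_k G (true, (j, k)) + \sum_j \sum_k G (false, (j, k)).
  by rewrite sum_pair big_bool /= !sum_pair.
have [_ _ _ K1E _] := sd1; have [_ _ _ K2E _] := sd2.
rewrite -subr_ge0.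
have -> : b * quad_form u (covmx K2 s) - a * quad_form u (covmx K1 s) =
    \sum_q c q * iint (H q).
  rewrite sumE /quad_form; congr (_ + _).
    rewrite mulr_sumr; apply: eq_bigr => j _; rewrite mulr_sumr.
    apply: eq_bigr => k _.
    by rewrite /c /H /= !mxE K2E; ring.
  rewrite mulr_sumr -sumrN; apply: eq_bigr => j _; rewrite mulr_sumr -sumrN.
  apply: eq_bigr => k _.
  by rewrite /c /H /= !mxE K1E; ring.
rewrite -iint_lincomb; last first.
  by move=> [[] p]; apply: spectral_density_iintegrable; [exact: sd2 | exact: sd1].
apply: iint_ge0 => w.
have -> : \sum_q c q * H q w = (b * f2 w - a * f1 w) *
    quad_form u (covmx (fun x => cos (tdot w x)) s).
  rewrite sumE /quad_form mulr_sumr -!big_split; apply: eq_bigr => j _.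
  rewrite mulr_sumr -big_split; apply: eq_bigr => k _.
  by rewrite /c /H mxE /=; ring.
by rewrite mulr_ge0 ?subr_ge0 ?quad_form_covmx_cos_ge0.
Qed.

Lemma le_quad_form_covmx_scaled (K1 K2 f1 f2 : d.-tuple R -> R) theta (a b : R) u :
  0 < theta ->
  spectral_density (fun x => theta * K1 x) f1 ->
  spectral_density (fun x => theta * K2 x) f2 ->
  (forall w, a * f1 w <= b * f2 w) ->
  a * quad_form u (covmx K1 s) <= b * quad_form u (covmx K2 s).
Proof.
move=> theta_gt0 sd1 sd2 /(le_quad_form_covmx u sd1 sd2).
by rewrite !quad_form_covmxZ !(mulrCA _ theta) ler_pM2l.
Qed.

End SpectralComparison.

Lemma posdef_fun_quad_form_gt0 (R : realType) d n (C : d.-tuple R -> R)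
    (s : 'I_n -> d.-tuple R) (u : 'rV[R]_n) :
  posdef_fun C -> injective s -> u != 0 -> 0 < quad_form u (covmx C s).
Proof.
move=> C_pd s_inj u0; rewrite -quad_formE.
have := C_pd n s s_inj u^T; rewrite trmxK; apply.
by apply: contraNneq u0 => /(congr1 trmx); rewrite trmxK trmx0 => ->.
Qed.

Lemma ler_ratio_dist1 (R : realFieldType) (x y e : R) :
  0 < y -> `|x / y - 1| <= e -> (1 - e) * y <= x <= (1 + e) * y.
Proof.
move=> y0; rewrite ler_distl => /andP [lo hi].
by apply/andP; split; [rewrite -ler_pdivlMr | rewrite -ler_pdivrMr].
Qed.

Theorem lemmaS2 (R : realType) (d n : nat)
  (K : R -> d.-tuple R -> R)          (* alpha |-> K_{alpha,nu}, nu fixed *)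
  (f : R -> R -> d.-tuple R -> R)     (* (theta, alpha) |-> f_{theta,alpha,nu} *)
  (theta0 alpha0 L r0 kappa : R) (s : 'I_n -> d.-tuple R) :
  (* K_{alpha,nu} is a positive definite function for every alpha > 0 *)
  (forall alpha, 0 < alpha -> posdef_fun (K alpha)) ->
  (* f_{theta,alpha,nu} is the spectral density of theta K_{alpha,nu} *)
  (forall theta alpha, 0 < theta -> 0 < alpha ->
     spectral_density (fun x => theta * K alpha x) (f theta alpha)) ->
  0 < theta0 -> 0 < alpha0 ->
  (* S_n: distinct points of [0,1]^d *)
  injective s ->
  (forall k (i : 'I_d), 0 <= tnth (s k) i <= 1) ->
  (* Assumption A2 (i) *)
  0 < L -> 0 < r0 < 2^-1 -> 0 < kappa ->
  (forall alpha, 0 < alpha -> `|alpha / alpha0 - 1| <= r0 ->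
     forall w, `|f theta0 alpha w / f theta0 alpha0 w - 1|
               <= L * `|alpha / alpha0 - 1| `^ kappa) ->
  (* Assumption A2 (ii) *)
  (forall theta alpha1 alpha2 w, 0 < theta -> 0 < alpha1 -> alpha1 <= alpha2 ->
     f theta alpha2 w <= f theta alpha1 w) ->
  forall alpha, 0 < alpha ->
  let M := invmx (covmx (K alpha0) s) *m covmx (K alpha) s in
  [/\ (`|alpha / alpha0 - 1| <= r0 ->
        forall lambda, eigenvalue M lambda ->
          1 - L * `|alpha / alpha0 - 1| `^ kappa <= lambda
          <= 1 + L * `|alpha / alpha0 - 1| `^ kappa),
      (alpha <= alpha0 -> forall lambda, eigenvalue M lambda -> 1 <= lambda)
    & (alpha0 <= alpha -> forall lambda, eigenvalue M lambda ->
          0 <= lambda <= 1)].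
Proof.
move=> K_pd sd th0 al0 s_inj _ _ /andP[r0_gt0 _] kappa_gt0 A2i A2ii alpha al M.
have qf_gt0 a u : 0 < a -> u != 0 -> 0 < quad_form u (covmx (K a) s).
  by move=> a0; apply: posdef_fun_quad_form_gt0 (K_pd a a0) s_inj.
have pd0 := qf_gt0 alpha0 _ al0.
have cmp a1 a2 c1 c2 u : 0 < a1 -> 0 < a2 ->
    (forall w, c1 * f theta0 a1 w <= c2 * f theta0 a2 w) ->
    c1 * quad_form u (covmx (K a1) s) <= c2 * quad_form u (covmx (K a2) s).
  move=> a10 a20.
  exact: (le_quad_form_covmx_scaled s u th0 (sd _ _ th0 a10) (sd _ _ th0 a20)).
(* A2 (i) at alpha = alpha0 reads |f/f - 1| <= 0, which fails where f = 0
   because then f/f = 0. *)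
have f0_gt0 w : 0 < f theta0 alpha0 w.
  have [f0_ge0 _ _ _ _] := sd theta0 alpha0 th0 al0.
  rewrite lt0r f0_ge0 andbT; apply/negP => /eqP f0w.
  have := A2i alpha0 al0 _ w; rewrite divff ?gt_eqF // subrr normr0.
  rewrite powR0 ?gt_eqF // mulr0 f0w invr0 mulr0 sub0r normrN normr1 ler10.
  by move=> /(_ (ltW r0_gt0)).
split.
- move=> near lambda ev; have bnd w := ler_ratio_dist1 (f0_gt0 w) (A2i alpha al near w).
  apply/andP; split.
  + apply: (le_eigenvalue_invmx_mul pd0 _ ev) => u _.
    rewrite -[X in _ <= X]mul1r; apply: cmp => // w.
    by rewrite mul1r; case/andP: (bnd w).
  + apply: (eigenvalue_invmx_mul_le pd0 _ ev) => u _.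
    rewrite -[X in X <= _]mul1r; apply: cmp => // w.
    by rewrite mul1r; case/andP: (bnd w).
- move=> le_alpha lambda ev; apply: (le_eigenvalue_invmx_mul pd0 _ ev) => u _.
  by rewrite -[X in _ <= X]mul1r; apply: cmp => // w; rewrite !mul1r A2ii.
- move=> ge_alpha lambda ev; apply/andP; split.
  + apply: (le_eigenvalue_invmx_mul pd0 _ ev) => u u0.
    by rewrite mul0r ltW ?qf_gt0.
  + apply: (eigenvalue_invmx_mul_le pd0 _ ev) => u _.
    by rewrite -[X in X <= _]mul1r; apply: cmp => // w; rewrite !mul1r A2ii.
Qed.
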